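(* Let $\Bbbk$ be a field and let $\mathcal{C}$ be a $\Bbbk$-admissible $2$-category. Let $\mathcal{S}(\mathcal{C})$ be the set of isomorphism classes of indecomposable $1$-morphisms in $\mathcal{C}$, and for $F,G,H\in\mathcal{S}(\mathcal{C})$ let $\mu_{F,G}(H)$ be the multiplicity with which $H$ occurs as a direct summand of the composition $F\circ G$. Then $(\mathcal{S}(\mathcal{C}),\mu)$ is a finitary multisemigroup with multiplicities.
   Context: A $2$-category $\mathcal{C}$ is $\Bbbk$-admissible if for all objects $\mathtt{i},\mathtt{j}$ the category $\mathcal{C}(\mathtt{i},\mathtt{j})$ is $\Bbbk$-linear, idempotent split and Krull–Schmidt, and horizontal composition is $\Bbbk$-bilinear. For a cardinal $\kappa\ge1$, $\mathrm{Card}_\kappa$ is the set of cardinals $\le\kappa$ with cardinal addition (of arbitrary families) and cardinal multiplication, any result larger than $\kappa$ being identified with $\kappa$; $\mathcal{B}_\kappa(X)$ is the set of functions $X\to\mathrm{Card}_\kappa$; for a cardinal $\lambda$ and $\nu\in\mathcal{B}_\kappa(S)$, $\lambda\nu$ is the pointwise sum of $\lambda$ copies of $\nu$. A multisemigroup with multiplicities bounded by $\kappa$ is a pair $(S,\mu)$, $S$ a non-empty set, $\mu:S\times S\to\mathcal{B}_\kappa(S)$, $(s,t)\mapsto \mu_{s,t}$, such that $\sum_{i\in S}\mu_{s,t}(i)\mu_{r,i}=\sum_{j\in S}\mu_{r,s}(j)\mu_{j,t}$ for all $r,s,t\in S$. Such a pair is finitary if $\kappa=\aleph_0$, $\mu_{r,s}(t)\neq\aleph_0$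 for all $r,s,t\in S$, and $\{t\in S:\mu_{r,s}(t)\neq0\}$ is finite for all $r,s\in S$. *)

From HB Require Import structures.
From mathcomp Require Import all_boot all_order all_algebra.
From Stdlib Require Import ClassicalEpsilon.
Set Implicit Arguments. Unset Strict Implicit. Unset Printing Implicit Defensive.
Import GRing.Theory.
Local Open Scope ring_scope.

Record LinCat (k : fieldType) := LinCatMk {
  lc_ob :> Type;
  lc_hom : lc_ob -> lc_ob -> lmodType k;
  lc_comp : forall X Y Z, lc_hom Y Z -> lc_hom X Y -> lc_hom X Z;
  lc_id : forall X, lc_hom X X;
  lc_compA : forall X Y Z W (f : lc_hom Z W) (g : lc_hom Y Z) (h : lc_hom X Y),
    lc_comp f (lc_comp g h) = lc_comp (lc_comp f g) h;
  lc_comp1f : forall X Y (f : lc_hom X Y), lc_comp (lc_id Y) f = f;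
  lc_compf1 : forall X Y (f : lc_hom X Y), lc_comp f (lc_id X) = f;
  lc_compDl : forall X Y Z (a : k) (f g : lc_hom Y Z) (h : lc_hom X Y),
    lc_comp (a *: f + g) h = a *: lc_comp f h + lc_comp g h;
  lc_compDr : forall X Y Z (a : k) (f : lc_hom Y Z) (g h : lc_hom X Y),
    lc_comp f (a *: g + h) = a *: lc_comp f g + lc_comp f h
}.
Arguments lc_hom {k} C X Y : rename.
Arguments lc_comp {k C X Y Z} f g : rename.
Arguments lc_id {k C} X : rename.

Section LinCatDefs.
Variables (k : fieldType) (C : LinCat k).

Definition hcast (X X' Y Y' : C) (e1 : X = X') (e2 : Y = Y') (f : lc_hom C X Y)
  : lc_hom C X' Y' :=
  match e1 in _ = X0 return lc_hom C X0 Y' with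
  | erefl => match e2 in _ = Y0 return lc_hom C X Y0 with erefl => f end
  end.

Definition lc_iso (X Y : C) : Prop :=
  exists (f : lc_hom C X Y) (g : lc_hom C Y X),
    lc_comp g f = lc_id X /\ lc_comp f g = lc_id Y.

Definition is_zero (X : C) : Prop := lc_id X = 0.

Definition is_dsum (X : C) (n : nat) (Y : 'I_n -> C) : Prop :=
  exists (inj : forall m, lc_hom C (Y m) X) (prj : forall m, lc_hom C X (Y m)),
    (forall m, lc_comp (prj m) (inj m) = lc_id (Y m)) /\
    (forall m m', m != m' -> lc_comp (prj m') (inj m) = 0) /\
    \sum_(m < n) lc_comp (inj m) (prj m) = lc_id X.

Definition pair_fam (X Y : C) : 'I_2 -> C := fun m => if m == ord0 then X else Y.

Definition additive : Prop :=
  (exists Z : C, is_zero Z) /\ forall X Y : C, exists Z, is_dsum Z (pair_fam X Y).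

Definition local_end (X : C) : Prop :=
  lc_id X <> 0 /\
  forall f : lc_hom C X X,
    (exists g, lc_comp g f = lc_id X /\ lc_comp f g = lc_id X) \/
    (exists g, lc_comp g (lc_id X - f) = lc_id X /\ lc_comp (lc_id X - f) g = lc_id X).

Definition krull_schmidt : Prop :=
  additive /\
  forall X : C, exists n (Y : 'I_n -> C), is_dsum X Y /\ forall m, local_end (Y m).

Definition idempotent_split : Prop :=
  forall (X : C) (e : lc_hom C X X), lc_comp e e = e ->
    exists (Y : C) (r : lc_hom C X Y) (s : lc_hom C Y X),
      lc_comp s r = e /\ lc_comp r s = lc_id Y.

Definition indecomposable (X : C) : Prop :=
  ~ is_zero X /\ forall Y : 'I_2 -> C, is_dsum X Y -> exists m, is_zero (Y m).

End LinCatDefs.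

Record TwoCat (k : fieldType) := TwoCatMk {
  tc_ob : Type;
  tc_hom : tc_ob -> tc_ob -> LinCat k;
  tc_id1 : forall i, tc_hom i i;
  (* tc_c1 F G = F o G  for G : i -> j, F : j -> l *)
  tc_c1 : forall i j l, tc_hom j l -> tc_hom i j -> tc_hom i l;
  tc_c2 : forall i j l (F F' : tc_hom j l) (G G' : tc_hom i j),
    lc_hom _ F F' -> lc_hom _ G G' -> lc_hom _ (tc_c1 F G) (tc_c1 F' G');
  tc_c1A : forall i j l m (F : tc_hom l m) (G : tc_hom j l) (H : tc_hom i j),
    tc_c1 (tc_c1 F G) H = tc_c1 F (tc_c1 G H);
  tc_c11f : forall i j (F : tc_hom i j), tc_c1 (tc_id1 j) F = F;
  tc_c1f1 : forall i j (F : tc_hom i j), tc_c1 F (tc_id1 i) = F;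
  tc_c2A : forall i j l m (F F' : tc_hom l m) (G G' : tc_hom j l) (H H' : tc_hom i j)
      (a : lc_hom _ F F') (b : lc_hom _ G G') (c : lc_hom _ H H'),
    hcast (tc_c1A F G H) (tc_c1A F' G' H') (tc_c2 (tc_c2 a b) c) = tc_c2 a (tc_c2 b c);
  tc_c21f : forall i j (F F' : tc_hom i j) (a : lc_hom _ F F'),
    hcast (tc_c11f F) (tc_c11f F') (tc_c2 (lc_id (tc_id1 j)) a) = a;
  tc_c2f1 : forall i j (F F' : tc_hom i j) (a : lc_hom _ F F'),
    hcast (tc_c1f1 F) (tc_c1f1 F') (tc_c2 a (lc_id (tc_id1 i))) = a;
  tc_c2id : forall i j l (F : tc_hom j l) (G : tc_hom i j),
    tc_c2 (lc_id F) (lc_id G) = lc_id (tc_c1 F G);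
  tc_interchange : forall i j l (F F' F'' : tc_hom j l) (G G' G'' : tc_hom i j)
      (a : lc_hom _ F' F'') (b : lc_hom _ F F') (c : lc_hom _ G' G'') (d : lc_hom _ G G'),
    tc_c2 (lc_comp a b) (lc_comp c d) = lc_comp (tc_c2 a c) (tc_c2 b d)
}.
Arguments tc_hom {k} C i j : rename.
Arguments tc_c1 {k C i j l} F G : rename.
Arguments tc_c2 {k C i j l F F' G G'} a b : rename.

Section TwoCatDefs.
Variables (k : fieldType) (C : TwoCat k).

Definition hcomp_bilinear : Prop :=
  forall i j l (F F' : tc_hom C j l) (G G' : tc_hom C i j) (a : k),
    (forall (x y : lc_hom _ F F') (z : lc_hom _ G G'),
        tc_c2 (a *: x + y) z = a *: tc_c2 x z + tc_c2 y z) /\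
    (forall (x : lc_hom _ F F') (y z : lc_hom _ G G'),
        tc_c2 x (a *: y + z) = a *: tc_c2 x y + tc_c2 x z).

(* k-admissible: hom categories k-linear (built in), idempotent split,
   Krull-Schmidt; horizontal composition k-bilinear *)
Definition admissible : Prop :=
  (forall i j, idempotent_split (tc_hom C i j) /\ krull_schmidt (tc_hom C i j)) /\
  hcomp_bilinear.

Definition mor1 := { ij : tc_ob C * tc_ob C & tc_hom C ij.1 ij.2 }.
Definition pack i j (F : tc_hom C i j) : mor1 := existT _ (i, j) F.

Definition iso1 (X Y : mor1) : Prop :=
  exists i j (F G : tc_hom C i j), X = pack F /\ Y = pack G /\ lc_iso F G.

Definition indec1 (X : mor1) : Prop :=
  exists i j (F : tc_hom C i j), X = pack F /\ indecomposable F.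

Definition SC := { P : mor1 -> Prop | exists X, indec1 X /\ P = iso1 X }.

(* n is the multiplicity of the class R as a direct summand of F o G,
   F in class P, G in class Q (0 if P, Q are not composable) *)
Definition mult_rel (P Q R : SC) (n : nat) : Prop :=
  (exists i j l (F : tc_hom C j l) (G : tc_hom C i j),
      proj1_sig P (pack F) /\ proj1_sig Q (pack G) /\
      exists m (Y : 'I_m -> tc_hom C i l),
        is_dsum (tc_c1 F G) Y /\ (forall t, indecomposable (Y t)) /\
        exists A : {set 'I_m}, (forall t, t \in A <-> proj1_sig R (pack (Y t))) /\
                               n = #|A|)
  \/ (n = 0%N /\ ~ exists i j l (F : tc_hom C j l) (G : tc_hom C i j),
                     proj1_sig P (pack F) /\ proj1_sig Q (pack G)).

Definition mu (P Q R : SC) : nat := epsilon (inhabits 0%N) (mult_rel P Q R).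

End TwoCatDefs.

(* Card_{aleph_0}: Some n = finite cardinal n, None = aleph_0 *)
Definition card0 := option nat.

Definition cmul (a b : card0) : card0 :=
  match a, b with
  | Some x, Some y => Some (x * y)%N
  | Some 0, None => Some 0%N
  | None, Some 0 => Some 0%N
  | _, _ => None
  end.

Definition fin_support (I : Type) (f : I -> card0) : Prop :=
  exists m (g : 'I_m -> I), forall i, f i <> Some 0%N -> exists t, g t = i.

Definition csum_rel (I : Type) (f : I -> card0) (c : card0) : Prop :=
  match c with
  | Some n => (forall i, f i <> None) /\
      exists m (g : 'I_m -> I), injective g /\
        (forall i, f i <> Some 0%N -> exists t, g t = i) /\
        n = (\sum_(t < m) odflt 0%N (f (g t)))%N
  | None => (exists i, f i = None) \/ ~ fin_support f
  end.

Definition multisemigroup (S : Type) (mu : S -> S -> S -> card0) : Prop :=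
  inhabited S /\
  forall r s t u : S, exists c : card0,
    csum_rel (fun i => cmul (mu s t i) (mu r i u)) c /\
    csum_rel (fun j => cmul (mu r s j) (mu j t u)) c.

Definition finitary_multisemigroup (S : Type) (mu : S -> S -> S -> card0) : Prop :=
  multisemigroup mu /\
  (forall r s t, mu r s t <> None) /\
  (forall r s, fin_support (mu r s)).

(* In a Krull-Schmidt category the indecomposable objects have
   local endomorphism rings, and the exchange argument for local summands
   shows that the isomorphism classes of the summands of a decomposition,
   counted with multiplicity, do not depend on the decomposition.  Hence
   mu(F, G)(H) is the number of summands of class H in any decomposition of
   F o G; in particular it is finite and has finite support.  Horizontal
   composition with a fixed 1-morphism preserves direct sums, so decomposing
   G o H = (+)_x V_x, respectively F o G = (+)_y U_y, both sides of the
   associativity law count the summands of class u in F o G o H, once through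
   (+)_x F o V_x and once through (+)_y U_y o H. *)

From mathcomp Require Import all_boot all_algebra.
From Stdlib Require Import Classical ClassicalEpsilon Eqdep ProofIrrelevance.
From Stdlib Require Import FunctionalExtensionality PropExtensionality.
Set Implicit Arguments. Unset Strict Implicit. Unset Printing Implicit Defensive.
Import GRing.Theory.
Local Open Scope ring_scope.

Local Notation "f *c g" := (lc_comp f g) (at level 40, left associativity).
Local Notation "1_ X" := (lc_id X) (at level 0, X at level 0).

Lemma sumn_enum_val (K : finType) (F : K -> nat) :
  (\sum_t F t = \sum_(i < #|K|) F (enum_val i))%N.
Proof. by rewrite -(big_enum_val (A := K)); apply: eq_bigl => t; rewrite inE. Qed.

Section LinearCategory.
Variables (k : fieldType) (C : LinCat k).
Implicit Types X Y Z : C.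

Lemma compDl X Y Z (f g : lc_hom C Y Z) (h : lc_hom C X Y) :
  (f + g) *c h = f *c h + g *c h.
Proof. by have := lc_compDl 1 f g h; rewrite !scale1r. Qed.

Lemma compDr X Y Z (f : lc_hom C Y Z) (g h : lc_hom C X Y) :
  f *c (g + h) = f *c g + f *c h.
Proof. by have := lc_compDr 1 f g h; rewrite !scale1r. Qed.

Lemma comp0l X Y Z (h : lc_hom C X Y) : (0 : lc_hom C Y Z) *c h = 0.
Proof. by apply: (addIr (0 *c h)); rewrite add0r -compDl addr0. Qed.

Lemma comp0r X Y Z (h : lc_hom C Y Z) : h *c (0 : lc_hom C X Y) = 0.
Proof. by apply: (addIr (h *c 0)); rewrite add0r -compDr addr0. Qed.

Lemma compNl X Y Z (f : lc_hom C Y Z) (h : lc_hom C X Y) : (- f) *c h = - (f *c h).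
Proof. by apply/eqP; rewrite -subr_eq0 opprK -compDl addNr comp0l. Qed.

Lemma compNr X Y Z (f : lc_hom C Y Z) (h : lc_hom C X Y) : f *c (- h) = - (f *c h).
Proof. by apply/eqP; rewrite -subr_eq0 opprK -compDr addNr comp0r. Qed.

Lemma compBl X Y Z (f g : lc_hom C Y Z) (h : lc_hom C X Y) :
  (f - g) *c h = f *c h - g *c h.
Proof. by rewrite compDl compNl. Qed.

Lemma compBr X Y Z (f : lc_hom C Y Z) (g h : lc_hom C X Y) :
  f *c (g - h) = f *c g - f *c h.
Proof. by rewrite compDr compNr. Qed.

Lemma comp_suml X Y Z (I : Type) (r : seq I) (P : pred I) (F : I -> lc_hom C Y Z)
    (h : lc_hom C X Y) :
  (\sum_(i <- r | P i) F i) *c h = \sum_(i <- r | P i) F i *c h.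
Proof. exact: (big_morph (lc_comp^~ h) (fun f g => compDl f g h) (comp0l _ h)). Qed.

Lemma comp_sumr X Y Z (I : Type) (r : seq I) (P : pred I) (F : I -> lc_hom C X Y)
    (h : lc_hom C Y Z) :
  h *c (\sum_(i <- r | P i) F i) = \sum_(i <- r | P i) h *c F i.
Proof. exact: (big_morph (lc_comp h) (compDr h) (comp0r _ h)). Qed.

Lemma lc_iso_refl X : lc_iso X X.
Proof. by exists 1_X, 1_X; rewrite lc_comp1f. Qed.

Lemma lc_iso_sym X Y : lc_iso X Y -> lc_iso Y X.
Proof. by move=> [a [b [ba ab]]]; exists b, a. Qed.

Lemma lc_iso_trans X Y Z : lc_iso X Y -> lc_iso Y Z -> lc_iso X Z.
Proof.
move=> [a [b [ba ab]]] [c [d [dc cd]]]; exists (c *c a), (b *c d).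
by rewrite -!lc_compA (lc_compA d) (lc_compA a) dc ab !lc_comp1f.
Qed.

Definition lc_unit X (f : lc_hom C X X) := exists g, g *c f = 1_X /\ f *c g = 1_X.

Section LocalEndomorphismRing.
Variables (X : C) (lX : local_end X).

Lemma local_end_id_neq0 : 1_X <> 0. Proof. by case: lX. Qed.

Lemma local_end_idem (e : lc_hom C X X) : e *c e = e -> e = 0 \/ e = 1_X.
Proof.
move=> ee; case: lX => _ /(_ e) [[g [g1 g2]]|[g [g1 g2]]].
  by right; rewrite -g1 -{2}ee lc_compA g1 lc_comp1f.
have e1e : e *c (1_X - e) = 0 by rewrite compBr lc_compf1 ee subrr.
by left; rewrite -(lc_compf1 e) -g2 lc_compA e1e comp0l.
Qed.

Lemma local_end_unit_linv (a l : lc_hom C X X) : l *c a = 1_X -> lc_unit a.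
Proof.
move=> la; have al2 : (a *c l) *c (a *c l) = a *c l.
  by rewrite lc_compA -(lc_compA a l a) la lc_compf1.
case: (local_end_idem al2) => al; last by exists l.
case: local_end_id_neq0.
have <- : (l *c a) *c (l *c a) = 0 by rewrite lc_compA -(lc_compA l a l) al comp0r comp0l.
by rewrite la lc_comp1f.
Qed.

Lemma local_end_unitD (a b : lc_hom C X X) : lc_unit (a + b) -> lc_unit a \/ lc_unit b.
Proof.
move=> [c [ca _]]; move: ca; rewrite compDr => cab.
case: lX => _ /(_ (c *c a)) [[d [da _]]|[d [da _]]].
  by left; apply: (@local_end_unit_linv _ (d *c c)); rewrite -lc_compA.
right; apply: (@local_end_unit_linv _ (d *c c)); rewrite -lc_compA.
by have -> : c *c b = 1_X - c *c a by rewrite -cab addrAC subrr add0r.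
Qed.

Lemma local_end_unit_sum n (a : 'I_n -> lc_hom C X X) :
  lc_unit (\sum_(i < n) a i) -> exists i, lc_unit (a i).
Proof.
elim: n a => [|n IH] a.
  by rewrite big_ord0 => -[g [g1 _]]; case: local_end_id_neq0; rewrite -g1 comp0r.
rewrite big_ord_recr /= => /local_end_unitD [/IH [i ui]|]; last by exists ord_max.
by exists (widen_ord (leqnSn n) i).
Qed.

End LocalEndomorphismRing.

Lemma local_end_iso_of_unit Y Z (q : lc_hom C Y Z) (p : lc_hom C Z Y) :
  local_end Y -> local_end Z -> lc_unit (p *c q) ->
  exists q', q' *c q = 1_Y /\ q *c q' = 1_Z.
Proof.
move=> lY lZ [g [gpq pqg]]; exists (g *c p); split; first by rewrite -lc_compA.
have qgp2 : (q *c (g *c p)) *c (q *c (g *c p)) = q *c (g *c p).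
  by rewrite !lc_compA -(lc_compA (q *c g) p q) -(lc_compA (q *c g) _ g) pqg lc_compf1.
case: (local_end_idem lZ qgp2) => // qgp0; case: (local_end_id_neq0 lY).
have <- : (g *c (p *c q)) *c (g *c (p *c q)) = 0.
  rewrite !lc_compA -(lc_compA (g *c p) q g) -(lc_compA (g *c p) (q *c g) p).
  by rewrite -(lc_compA q g p) qgp0 comp0r comp0l.
by rewrite gpq lc_comp1f.
Qed.

Lemma local_end_iso X Y : lc_iso X Y -> local_end X -> local_end Y.
Proof.
move=> [a [b [ba ab]]] [nzX lX].
have conj_unit f : lc_unit (b *c f *c a) -> lc_unit f.
  move=> [g [g1 g2]]; exists (a *c g *c b); split.
    transitivity (a *c (g *c (b *c f *c a)) *c b); last by rewrite g1 lc_compf1.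
    by rewrite !lc_compA -(lc_compA (a *c g *c b *c f) a b) ab lc_compf1.
  transitivity (a *c ((b *c f *c a) *c g) *c b); last by rewrite g2 lc_compf1.
  by rewrite !lc_compA ab lc_comp1f.
split.
  by move=> Y0; apply: nzX; rewrite -ba -(lc_comp1f a) Y0 comp0l comp0r.
move=> f; case: (lX (b *c f *c a)) => fu; [left|right]; apply: conj_unit => //.
by rewrite compBr compBl lc_compf1 ba.
Qed.

Section Decomposition.
Variables (X : C) (e : lc_hom C X X) (I : finType) (Y : I -> C)
  (inj : forall t, lc_hom C (Y t) X) (prj : forall t, lc_hom C X (Y t)).

(* The idempotent [e] splits as the direct sum of the [Y t]; [is_dsum X Y] is
   the case [e = 1_X].  Arbitrary idempotents are needed to run the exchange
   argument by induction. *)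
Definition decomp :=
  (forall t, prj t *c inj t = 1_(Y t)) /\
  (forall t t', t != t' -> prj t' *c inj t = 0) /\
  \sum_t inj t *c prj t = e.

Hypothesis D : decomp.

Lemma decomp_inj t : e *c inj t = inj t.
Proof.
case: D => [d1 [d2 <-]]; rewrite comp_suml (bigD1 t) //= big1 ?addr0.
  by rewrite -lc_compA d1 lc_compf1.
by move=> t' /negPf t't; rewrite -lc_compA d2 ?comp0r // eq_sym t't.
Qed.

Lemma decomp_prj t : prj t *c e = prj t.
Proof.
case: D => [d1 [d2 <-]]; rewrite comp_sumr (bigD1 t) //= big1 ?addr0.
  by rewrite lc_compA d1 lc_comp1f.
by move=> t' /negPf t't; rewrite lc_compA d2 ?comp0l // t't.
Qed.

Lemma decomp_idem : e *c e = e.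
Proof.
case: (D) => [_ [_ De]]; rewrite -{2}De comp_sumr -[RHS]De.
by apply: eq_bigr => t _; rewrite lc_compA decomp_inj.
Qed.

End Decomposition.

Lemma decomp_transport X (f g : lc_hom C X X) (u v : lc_hom C X X) (I : finType)
    (Y : I -> C) inj prj :
  decomp g inj prj -> u *c v = g -> v *c g *c u = f ->
  decomp f (fun t => v *c inj t : lc_hom C (Y t) X) (fun t => prj t *c u).
Proof.
move=> D uv vgu; have [d1 [d2 dS]] := D; split; last split.
- by move=> t; rewrite -!lc_compA (lc_compA u v) uv (decomp_inj D).
- by move=> t t' tt'; rewrite -!lc_compA (lc_compA u v) uv (decomp_inj D) d2.
rewrite -vgu -dS comp_sumr comp_suml; apply: eq_bigr => t _.
by rewrite !lc_compA.
Qed.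

Lemma decomp_drop X (e : lc_hom C X X) n (Y : 'I_n.+1 -> C) inj prj (s : 'I_n.+1) :
  decomp e inj prj ->
  decomp (e - inj s *c prj s) (fun i => inj (lift s i) : lc_hom C (Y (lift s i)) X)
    (fun i => prj (lift s i)).
Proof.
move=> [d1 [d2 dS]]; split; first by move=> i; apply: d1.
split; first by move=> i i' ii'; apply: d2; rewrite (inj_eq (@lift_inj _ s)).
by rewrite -dS (bigD1_ord s) //= addrAC subrr add0r.
Qed.

Lemma decomp_local_pivot X (e : lc_hom C X X) n (Z : 'I_n -> C) inj prj
    Y (u : lc_hom C Y X) (p : lc_hom C X Y) :
  decomp e inj prj -> local_end Y -> (forall s, local_end (Z s)) -> p *c e *c u = 1_Y ->
  exists s (q : lc_hom C (Z s) Y), q *c (prj s *c u) = 1_Y /\ (prj s *c u) *c q = 1_(Z s).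
Proof.
move=> [_ [_ dS]] lY lZ peu.
have [s us] : exists s, lc_unit ((p *c inj s) *c (prj s *c u)).
  apply: (@local_end_unit_sum _ lY _ (fun s => (p *c inj s) *c (prj s *c u))).
  have -> : \sum_s (p *c inj s) *c (prj s *c u) = 1_Y.
    by rewrite -peu -dS comp_sumr comp_suml; apply: eq_bigr => s _; rewrite !lc_compA.
  by exists 1_Y; rewrite lc_comp1f.
have [q qE] := local_end_iso_of_unit lY (lZ s) us.
by exists s, q.
Qed.

Lemma decomp_exchange X (e : lc_hom C X X) n (Z : 'I_n.+1 -> C) inj prj (s : 'I_n.+1)
    Y (u : lc_hom C Y X) (p : lc_hom C X Y) (q : lc_hom C (Z s) Y) :
  decomp e inj prj -> e *c u = u -> p *c e = p -> p *c u = 1_Y ->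
  q *c (prj s *c u) = 1_Y -> (prj s *c u) *c q = 1_(Z s) ->
  exists inj' prj', @decomp _ (e - u *c p) _ (fun i => Z (lift s i)) inj' prj'.
Proof.
(* With [h := q *c prj s], the idempotent [g := e - u *c h] visibly splits along
   the [Z (lift s i)], and [g *c f = g], [f *c g = f] transport this to [f]. *)
move=> D eu pe pu qsu suq; have [d1 [d2 _]] := D.
pose h := q *c prj s; pose f := e - u *c p; pose g := e - u *c h.
have hu : h *c u = 1_Y by rewrite -lc_compA.
have g_inj i : g *c inj (lift s i) = inj (lift s i).
  rewrite compBl (decomp_inj D) -!lc_compA d2 ?comp0r ?subr0 //.
  by rewrite eq_sym neq_lift.
have prj_g : prj s *c g = 0.
  by rewrite compBr (decomp_prj D) !lc_compA suq lc_comp1f subrr.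
have Dg : @decomp _ g _ (fun i => Z (lift s i)) (fun i => inj (lift s i))
    (fun i => prj (lift s i) *c g).
  split; first by move=> i; rewrite -lc_compA g_inj d1.
  split; first by move=> i i' ii'; rewrite -lc_compA g_inj d2 // (inj_eq (@lift_inj _ s)).
  under eq_bigr do rewrite lc_compA; rewrite -comp_suml.
  have [_ [_ ->]] := decomp_drop s D.
  by rewrite compBl -lc_compA prj_g comp0r subr0 compBr (decomp_idem D) lc_compA eu.
have fu : f *c u = 0 by rewrite compBl eu -lc_compA pu lc_compf1 subrr.
have gu : g *c u = 0 by rewrite compBl eu -lc_compA hu lc_compf1 subrr.
have fe : f *c e = f by rewrite compBl (decomp_idem D) -lc_compA pe.
have ge : g *c e = g by rewrite compBl (decomp_idem D) -!lc_compA (decomp_prj D).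
have fg : f *c g = f by rewrite {1}/g compBr fe lc_compA fu comp0l subr0.
have gf : g *c f = g by rewrite {1}/f compBr ge lc_compA gu comp0l subr0.
have fgg : f *c g *c g = f by rewrite !fg.
by eexists; eexists; exact: (decomp_transport Dg gf fgg).
Qed.

Lemma krull_schmidt_ord (w : C -> nat) (w_iso : forall A B, lc_iso A B -> w A = w B) m :
  forall n X (e : lc_hom C X X) (Y : 'I_m -> C) (Z : 'I_n -> C) inj prj inj' prj',
  @decomp X e _ Y inj prj -> @decomp X e _ Z inj' prj' ->
  (forall t, local_end (Y t)) -> (forall s, local_end (Z s)) ->
  (\sum_t w (Y t) = \sum_s w (Z s))%N.
Proof.
elim: m => [|m IH] n X e Y Z inj prj inj' prj' DY DZ lY lZ.
  case: n Z inj' prj' DZ lZ => [|n] Z inj' prj' DZ lZ; first by rewrite !big_ord0.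
  case: (local_end_id_neq0 (lZ ord0)); have [_ [_ e0]] := DY; have [d1 _] := DZ.
  by rewrite big_ord0 in e0; rewrite -(d1 ord0) -(decomp_inj DZ) -e0 comp0l comp0r.
have [d1 _] := DY.
have peu : prj ord0 *c e *c inj ord0 = 1_(Y ord0) by rewrite (decomp_prj DY) d1.
have [s [q [qsu suq]]] := decomp_local_pivot DZ (lY ord0) lZ peu.
case: n => [|n] in Z inj' prj' DZ lZ s q qsu suq *; first by case: s q qsu suq.
have [inj2 [prj2 DZs]] :=
  decomp_exchange DZ (decomp_inj DY ord0) (decomp_prj DY ord0) (d1 ord0) qsu suq.
rewrite big_ord_recl (bigD1_ord s) //= (IH _ _ _ _ _ _ _ _ _ (decomp_drop ord0 DY) DZs).
- by congr (_ + _)%N; apply: w_iso; exists (prj' s *c inj ord0), q.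
- by move=> i; apply: lY.
- by move=> i; apply: lZ.
Qed.

Lemma decomp_enum X (e : lc_hom C X X) (I : finType) (Y : I -> C) inj prj :
  decomp e inj prj ->
  @decomp X e 'I_#|I| (fun t => Y (enum_val t)) (fun t => inj (enum_val t))
    (fun t => prj (enum_val t)).
Proof.
move=> [d1 [d2 dS]]; split=> //; split.
  by move=> t t' tt'; apply: d2; rewrite (inj_eq enum_val_inj).
rewrite -dS; have -> : \sum_t inj t *c prj t = \sum_(t in I) inj t *c prj t.
  by apply: eq_bigl => t; rewrite inE.
by rewrite (big_enum_val (A := I)).
Qed.

Lemma krull_schmidt_unique (w : C -> nat) (w_iso : forall A B, lc_iso A B -> w A = w B)
    X (e : lc_hom C X X) (I J : finType) (Y : I -> C) (Z : J -> C) inj prj inj' prj' :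
  @decomp X e _ Y inj prj -> @decomp X e _ Z inj' prj' ->
  (forall t, local_end (Y t)) -> (forall s, local_end (Z s)) ->
  (\sum_t w (Y t) = \sum_s w (Z s))%N.
Proof.
move=> DY DZ lY lZ.
rewrite (sumn_enum_val (fun t => w (Y t))) (sumn_enum_val (fun s => w (Z s))).
exact: (krull_schmidt_ord w_iso (decomp_enum DY) (decomp_enum DZ)).
Qed.

Lemma decomp_iso X X' (a : lc_hom C X X') (b : lc_hom C X' X) (I : finType)
    (Y : I -> C) inj prj :
  b *c a = 1_X -> a *c b = 1_X' -> @decomp X 1_X _ Y inj prj ->
  @decomp X' 1_X' _ Y (fun t => a *c inj t) (fun t => prj t *c b).
Proof.
move=> ba ab [d1 [d2 dS]]; split; last split.
- by move=> t; rewrite -lc_compA (lc_compA b) ba lc_comp1f.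
- by move=> t t' tt'; rewrite -lc_compA (lc_compA b) ba lc_comp1f d2.
rewrite -ab -{2}(lc_compf1 a) -dS comp_sumr comp_suml.
by apply: eq_bigr => t _; rewrite !lc_compA.
Qed.

Lemma decomp_flatten X (I : finType) (J : I -> finType) (V : I -> C) inj prj
    (W : forall x, J x -> C) (inj2 : forall x y, lc_hom C (W x y) (V x))
    (prj2 : forall x y, lc_hom C (V x) (W x y)) :
  @decomp X 1_X _ V inj prj -> (forall x, @decomp _ 1_(V x) _ (W x) (inj2 x) (prj2 x)) ->
  @decomp X 1_X {x : I & J x} (fun p => W (tag p) (tagged p))
    (fun p => inj (tag p) *c inj2 (tag p) (tagged p))
    (fun p => prj2 (tag p) (tagged p) *c prj (tag p)).
Proof.
move=> [d1 [d2 dS]] DW; split; last split.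
- case=> x y /=; have [e1 _] := DW x.
  by rewrite -lc_compA (lc_compA (prj x)) d1 lc_comp1f e1.
- case=> x y [x' y'] /= xy; have [_ [e2 _]] := DW x.
  case: (eqVneq x x') => [xx'|xx']; last first.
    by rewrite -lc_compA (lc_compA (prj x')) d2 // comp0l comp0r.
  subst x'; rewrite -lc_compA (lc_compA (prj x)) d1 lc_comp1f e2 //.
  by apply: contraNneq xy => ->.
rewrite -dS -(sig_big_dep xpredT (fun _ => xpredT)
  (fun x y => inj x *c inj2 x y *c (prj2 x y *c prj x))) /=.
apply: eq_bigr => x _; have [_ [_ eS]] := DW x.
rewrite -[in RHS](lc_compf1 (inj x)) -eS comp_sumr comp_suml.
by apply: eq_bigr => y _; rewrite !lc_compA.
Qed.

Lemma local_end_indecomposable X : local_end X -> indecomposable X.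
Proof.
move=> lX; split; first exact: (local_end_id_neq0 lX).
move=> Y [inj [prj [d1 [d2 _]]]].
have ee : (inj ord0 *c prj ord0) *c (inj ord0 *c prj ord0) = inj ord0 *c prj ord0.
  by rewrite lc_compA -(lc_compA (inj ord0) (prj ord0) (inj ord0)) d1 lc_compf1.
case: (local_end_idem lX ee) => [e0|e1].
  exists ord0; rewrite /is_zero -(d1 ord0).
  transitivity (prj ord0 *c (inj ord0 *c prj ord0) *c inj ord0).
    by rewrite lc_compA d1 lc_comp1f.
  by rewrite e0 comp0r comp0l.
exists ord_max; rewrite /is_zero -(d1 ord_max) -(lc_comp1f (inj ord_max)) -e1.
by rewrite !lc_compA d2 ?comp0l.
Qed.

Lemma split_summand X Y (u : lc_hom C Y X) (p : lc_hom C X Y) :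
  idempotent_split C -> p *c u = 1_Y ->
  exists W (r : lc_hom C X W) (s : lc_hom C W X),
    s *c r = 1_X - u *c p /\ is_dsum X (pair_fam Y W).
Proof.
move=> split_C pu.
have up2 : (u *c p) *c (u *c p) = u *c p by rewrite lc_compA -(lc_compA u p u) pu lc_compf1.
have e2 : (1_X - u *c p) *c (1_X - u *c p) = 1_X - u *c p.
  by rewrite compBl lc_comp1f compBr lc_compf1 up2 subrr subr0.
have [W [r [s [sr rs]]]] := split_C X _ e2; exists W, r, s; split => //.
have r_up : r *c (u *c p) = 0.
  have : r *c (s *c r) = r by rewrite lc_compA rs lc_comp1f.
  by rewrite sr compBr lc_compf1 -{3}[r]subr0 => /subrI.
have up_s : (u *c p) *c s = 0.
  have : (s *c r) *c s = s by rewrite -lc_compA rs lc_compf1.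
  by rewrite sr compBl lc_comp1f -{3}[s]subr0 => /subrI.
have ru : r *c u = 0 by rewrite -(lc_compf1 u) -pu !lc_compA -(lc_compA r) r_up comp0l.
have ps : p *c s = 0 by rewrite -(lc_comp1f p) -pu -!lc_compA (lc_compA u) up_s comp0r.
pose inj2 (m : 'I_2) : lc_hom C (pair_fam Y W m) X :=
  if m == ord0 as b return lc_hom C (if b then Y else W) X then u else s.
pose prj2 (m : 'I_2) : lc_hom C X (pair_fam Y W m) :=
  if m == ord0 as b return lc_hom C X (if b then Y else W) then p else r.
exists inj2, prj2; split; last split.
- by case=> [[|[|//]]] ?; rewrite /prj2 /inj2 /pair_fam /=.
- by case=> [[|[|//]]] ?; case=> [[|[|//]]] ?; rewrite /prj2 /inj2 /pair_fam /=.
- by rewrite !big_ord_recl big_ord0 /prj2 /inj2 /pair_fam /= addr0 sr addrC subrK.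
Qed.

Lemma indecomposable_local_end X :
  krull_schmidt C -> idempotent_split C -> indecomposable X -> local_end X.
Proof.
move=> [_ KS] split_C [nzX indX].
have [n [Z [[inj [prj [d1 [d2 dS]]]] lZ]]] := KS X.
case: n => [|n] in Z inj prj d1 d2 dS lZ *.
  by case: nzX; rewrite /is_zero -dS big_ord0.
have [W [r [s [sr dsumX]]]] := split_summand split_C (d1 ord0).
have [[[|[|//]] ?] /= Z0] := indX _ dsumX; first by case: (local_end_id_neq0 (lZ ord0)).
apply: (local_end_iso _ (lZ ord0)); exists (inj ord0), (prj ord0); split; first exact: d1.
have : s *c r = 0 by rewrite -(lc_comp1f r) Z0 comp0l comp0r.
by rewrite sr => /eqP; rewrite subr_eq0 eq_sym => /eqP.
Qed.

End LinearCategory.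

Section TwoCategory.
Variables (k : fieldType) (C : TwoCat k).
Hypothesis bilin : hcomp_bilinear C.

Lemma hcompDl i j l (F F' : tc_hom C j l) (G G' : tc_hom C i j) (x y : lc_hom _ F F')
    (z : lc_hom _ G G') :
  tc_c2 (x + y) z = tc_c2 x z + tc_c2 y z.
Proof. by have [H _] := bilin F F' G G' 1; move: (H x y z); rewrite !scale1r. Qed.

Lemma hcompDr i j l (F F' : tc_hom C j l) (G G' : tc_hom C i j) (x : lc_hom _ F F')
    (y z : lc_hom _ G G') :
  tc_c2 x (y + z) = tc_c2 x y + tc_c2 x z.
Proof. by have [_ H] := bilin F F' G G' 1; move: (H x y z); rewrite !scale1r. Qed.

Lemma hcomp0l i j l (F F' : tc_hom C j l) (G G' : tc_hom C i j) (z : lc_hom _ G G') :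
  tc_c2 (0 : lc_hom _ F F') z = 0.
Proof. by apply: (addIr (tc_c2 (0 : lc_hom _ F F') z)); rewrite add0r -hcompDl addr0. Qed.

Lemma hcomp0r i j l (F F' : tc_hom C j l) (G G' : tc_hom C i j) (x : lc_hom _ F F') :
  tc_c2 x (0 : lc_hom _ G G') = 0.
Proof. by apply: (addIr (tc_c2 x (0 : lc_hom _ G G'))); rewrite add0r -hcompDr addr0. Qed.

Lemma hcomp_suml i j l (F F' : tc_hom C j l) (G G' : tc_hom C i j) (z : lc_hom _ G G')
    (I : Type) (r : seq I) (P : pred I) (f : I -> lc_hom _ F F') :
  tc_c2 (\sum_(t <- r | P t) f t) z = \sum_(t <- r | P t) tc_c2 (f t) z.
Proof. exact: (big_morph (tc_c2^~ z) (fun a b => hcompDl a b z) (hcomp0l _ _ z)). Qed.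

Lemma hcomp_sumr i j l (F F' : tc_hom C j l) (G G' : tc_hom C i j) (x : lc_hom _ F F')
    (I : Type) (r : seq I) (P : pred I) (f : I -> lc_hom _ G G') :
  tc_c2 x (\sum_(t <- r | P t) f t) = \sum_(t <- r | P t) tc_c2 x (f t).
Proof. exact: (big_morph (tc_c2 x) (hcompDr x) (hcomp0r _ _ x)). Qed.

Lemma decomp_hcompl i j l (F : tc_hom C j l) (G : tc_hom C i j) (I : finType) Y inj prj :
  @decomp _ _ G 1_G I Y inj prj ->
  @decomp _ _ (tc_c1 F G) 1_(tc_c1 F G) I (fun t => tc_c1 F (Y t))
    (fun t => tc_c2 1_F (inj t)) (fun t => tc_c2 1_F (prj t)).
Proof.
move=> [d1 [d2 dS]]; split; last split.
- by move=> t; rewrite -tc_interchange lc_comp1f d1 tc_c2id.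
- by move=> t t' tt'; rewrite -tc_interchange lc_comp1f d2 // hcomp0r.
rewrite -tc_c2id -dS hcomp_sumr; apply: eq_bigr => t _.
by rewrite -tc_interchange lc_comp1f.
Qed.

Lemma decomp_hcompr i j l (F : tc_hom C j l) (G : tc_hom C i j) (I : finType) Y inj prj :
  @decomp _ _ F 1_F I Y inj prj ->
  @decomp _ _ (tc_c1 F G) 1_(tc_c1 F G) I (fun t => tc_c1 (Y t) G)
    (fun t => tc_c2 (inj t) 1_G) (fun t => tc_c2 (prj t) 1_G).
Proof.
move=> [d1 [d2 dS]]; split; last split.
- by move=> t; rewrite -tc_interchange lc_comp1f d1 tc_c2id.
- by move=> t t' tt'; rewrite -tc_interchange lc_comp1f d2 // hcomp0l.
rewrite -tc_c2id -dS hcomp_suml; apply: eq_bigr => t _.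
by rewrite -tc_interchange lc_comp1f.
Qed.

End TwoCategory.

Lemma lc_iso_hcomp (k : fieldType) (C : TwoCat k) i j l (F F' : tc_hom C j l)
    (G G' : tc_hom C i j) :
  lc_iso F F' -> lc_iso G G' -> lc_iso (tc_c1 F G) (tc_c1 F' G').
Proof.
move=> [a [b [ba ab]]] [c [d [dc cd]]]; exists (tc_c2 a c), (tc_c2 b d).
by rewrite -!tc_interchange ba ab dc cd !tc_c2id.
Qed.

Definition pbool (P : Prop) : bool := if excluded_middle_informative P then true else false.

Lemma pboolP P : reflect P (pbool P).
Proof. by rewrite /pbool; case: excluded_middle_informative => h; constructor. Qed.

Definition indic (P : Prop) : nat := pbool P.

Lemma indicT (P : Prop) : P -> indic P = 1%N.
Proof. by rewrite /indic; case: pboolP. Qed.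

Lemma indicF (P : Prop) : ~ P -> indic P = 0%N.
Proof. by rewrite /indic; case: pboolP. Qed.

Lemma indic_iff (P Q : Prop) : (P <-> Q) -> indic P = indic Q.
Proof. by move=> PQ; rewrite /indic; case: pboolP => p; case: pboolP => q //; tauto. Qed.

Section Classes.
Variables (k : fieldType) (C : TwoCat k).

Definition in_class (P : SC C) i j (F : tc_hom C i j) := proj1_sig P (pack F).

Lemma pack_ij i j (F : tc_hom C i j) i' j' (F' : tc_hom C i' j') :
  pack F = pack F' -> i = i' /\ j = j'.
Proof. by move/(f_equal (@projT1 _ _)) => [-> ->]. Qed.

Lemma pack_inj i j (F F' : tc_hom C i j) : pack F = pack F' -> F = F'.
Proof. exact: EqdepTheory.inj_pair2. Qed.

Lemma iso1_packE i j (F G : tc_hom C i j) : iso1 (pack F) (pack G) <-> lc_iso F G.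
Proof.
split; last by move=> FG; exists i, j, F, G.
move=> [a [b [F1 [G1 [eF [eG FG]]]]]]; have [ea eb] := pack_ij eF; subst a b.
by rewrite (pack_inj eF) (pack_inj eG).
Qed.

Lemma iso1_ij i j (F : tc_hom C i j) i' j' (G : tc_hom C i' j') :
  iso1 (pack F) (pack G) -> i' = i /\ j' = j.
Proof. by move=> [a [b [F1 [G1 [/pack_ij [-> ->] [/pack_ij [-> ->] _]]]]]]. Qed.

Lemma iso1_trans (X Y Z : mor1 C) : iso1 X Y -> iso1 Y Z -> iso1 X Z.
Proof.
move=> [a [b [F1 [F2 [-> [-> F12]]]]]] [a' [b' [F3 [F4 [e [-> F34]]]]]].
have [ea eb] := pack_ij e; subst a' b'; rewrite -(pack_inj e) in F34.
by exists a, b, F1, F4; do 2 split => //; exact: lc_iso_trans F12 F34.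
Qed.

Lemma iso1_sym (X Y : mor1 C) : iso1 X Y -> iso1 Y X.
Proof.
move=> [a [b [F1 [F2 [-> [-> F12]]]]]].
by exists a, b, F2, F1; do 2 split => //; exact: lc_iso_sym.
Qed.

Lemma class_repr (P : SC C) :
  exists i j (G : tc_hom C i j), indecomposable G /\ proj1_sig P = iso1 (pack G).
Proof. by case: P => p [X [[a [b [G [EX indG]]]] Ep]] /=; exists a, b, G; rewrite Ep EX. Qed.

Lemma in_class_ij P i j (F : tc_hom C i j) i' j' (F' : tc_hom C i' j') :
  in_class P F -> in_class P F' -> i' = i /\ j' = j.
Proof.
have [a [b [G [_ E]]]] := class_repr P.
by rewrite /in_class E => /iso1_ij [-> ->] /iso1_ij [-> ->].
Qed.

Lemma in_class_iso P i j (F F' : tc_hom C i j) :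
  in_class P F -> in_class P F' -> lc_iso F F'.
Proof.
have [a [b [G [_ E]]]] := class_repr P; rewrite /in_class E => GF GF'.
have [ea eb] := iso1_ij GF; subst a b.
by apply: lc_iso_trans (lc_iso_sym _) _; apply/iso1_packE; [exact: GF|exact: GF'].
Qed.

Lemma in_class_isoW P i j (F F' : tc_hom C i j) :
  in_class P F -> lc_iso F F' -> in_class P F'.
Proof.
have [a [b [G [_ E]]]] := class_repr P; rewrite /in_class E => GF FF'.
by apply: (iso1_trans GF); apply/iso1_packE.
Qed.

Definition class_of i j (G : tc_hom C i j) (indG : indecomposable G) : SC C :=
  exist _ (iso1 (pack G))
    (ex_intro _ (pack G) (conj (ex_intro _ i (ex_intro _ j (ex_intro _ G (conj erefl indG))))
      erefl)).

Lemma in_class_of i j (G : tc_hom C i j) (indG : indecomposable G) :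
  in_class (class_of indG) G.
Proof. exact/iso1_packE/lc_iso_refl. Qed.

Lemma class_ofE P i j (G : tc_hom C i j) (indG : indecomposable G) :
  in_class P G -> P = class_of indG.
Proof.
case: P => p pP; rewrite /in_class /=.
have [a [b [G0 [_ E]]]] := class_repr (exist _ p pP); rewrite /= in E; subst p => G0G.
have E : iso1 (pack G0) = iso1 (pack G).
  apply: functional_extensionality => X; apply: propositional_extensionality.
  by split; [apply: iso1_trans; apply: iso1_sym|exact: iso1_trans].
by move: pP; rewrite E => pP; congr exist; exact: proof_irrelevance.
Qed.

Definition composable (P Q : SC C) :=
  exists i j l (F : tc_hom C j l) (G : tc_hom C i j), in_class P F /\ in_class Q G.

End Classes.

Lemma card_set_indic (I : finType) (A : {set I}) (P : I -> Prop) :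
  (forall t, t \in A <-> P t) -> #|A| = (\sum_t indic (P t))%N.
Proof.
move=> AP; rewrite -sum1_card big_mkcond /=; apply: eq_bigr => t _.
by rewrite /indic; case: pboolP => [/AP ->|Pt] //; case: ifP => // /AP.
Qed.

Record local_decomp (k : fieldType) (C : TwoCat k) i j (X : tc_hom C i j) :=
  LocalDecomp {
  ld_size : nat;
  ld_obj : 'I_ld_size -> tc_hom C i j;
  ld_inj : forall t, lc_hom _ (ld_obj t) X;
  ld_prj : forall t, lc_hom _ X (ld_obj t);
  ld_decomp : decomp 1_X ld_inj ld_prj;
  ld_local : forall t, local_end (ld_obj t) }.
Arguments ld_obj {k C i j X} D t : rename.
Arguments ld_inj {k C i j X} D t : rename.
Arguments ld_prj {k C i j X} D t : rename.
Arguments ld_decomp {k C i j X} D : rename.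
Arguments ld_local {k C i j X} D t : rename.

Definition ld_class (k : fieldType) (C : TwoCat k) i j (X : tc_hom C i j)
    (D : local_decomp X) t : SC C :=
  class_of (local_end_indecomposable (ld_local D t)).
Arguments ld_class {k C i j X} D t.

Lemma in_ld_class (k : fieldType) (C : TwoCat k) (R : SC C) i j (X : tc_hom C i j)
    (D : local_decomp X) t :
  in_class R (ld_obj D t) <-> ld_class D t = R.
Proof.
by split=> [/(class_ofE (local_end_indecomposable (ld_local D t))) ->|<-] //;
  exact: in_class_of.
Qed.

Lemma in_class_ld_class (k : fieldType) (C : TwoCat k) i j (X : tc_hom C i j)
    (D : local_decomp X) t :
  in_class (ld_class D t) (ld_obj D t).
Proof. exact: in_class_of. Qed.
Arguments in_class_ld_class {k C i j X} D t.

Section Multiplicity.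
Variables (k : fieldType) (C : TwoCat k).
Hypothesis admC : admissible C.

Lemma indecomposable_local i j (F : tc_hom C i j) : indecomposable F -> local_end F.
Proof. by have [split_C KS] := admC.1 i j; exact: indecomposable_local_end. Qed.

Lemma local_decomp_inhabited i j (X : tc_hom C i j) : inhabited (local_decomp X).
Proof.
have [_ [_ KS]] := admC.1 i j; have [m [Y [[inj [prj D]] lY]]] := KS X.
by constructor; exact: (LocalDecomp D lY).
Qed.

Definition some_decomp i j (X : tc_hom C i j) : local_decomp X :=
  epsilon (local_decomp_inhabited X) (fun _ => True).

Definition mult (R : SC C) i j (X : tc_hom C i j) : nat :=
  \sum_t indic (in_class R (ld_obj (some_decomp X) t)).

Lemma multE (R : SC C) i j (X : tc_hom C i j) (I : finType) (Y : I -> tc_hom C i j)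
    inj prj :
  @decomp _ _ X 1_X _ Y inj prj -> (forall t, local_end (Y t)) ->
  mult R X = (\sum_t indic (in_class R (Y t)))%N.
Proof.
move=> D lY; apply: (krull_schmidt_unique (w := fun Z => indic (in_class R Z)) _
  (ld_decomp _) D (ld_local _) lY) => A B AB.
by apply: indic_iff; split=> RA; [exact: in_class_isoW AB|exact: in_class_isoW (lc_iso_sym AB)].
Qed.

Lemma mult_iso (R : SC C) i j (X X' : tc_hom C i j) : lc_iso X X' -> mult R X = mult R X'.
Proof.
move=> [a [b [ba ab]]]; pose D := some_decomp X.
rewrite (multE R (decomp_iso ba ab (ld_decomp D)) (ld_local D)).
exact: (multE R (ld_decomp D) (ld_local D)).
Qed.

Lemma mult_classE (R : SC C) i j (X : tc_hom C i j) :
  mult R X = (\sum_t indic (ld_class (some_decomp X) t = R))%N.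
Proof. by apply: eq_bigr => t _; apply: indic_iff; exact: in_ld_class. Qed.

Lemma mult_rel_mult (P Q R : SC C) i j l (F : tc_hom C j l) (G : tc_hom C i j) :
  in_class P F -> in_class Q G -> mult_rel P Q R (mult R (tc_c1 F G)).
Proof.
move=> PF QG; left; exists i, j, l, F, G; do 2 split => //.
pose D := some_decomp (tc_c1 F G); exists (ld_size D), (ld_obj D); split.
  by exists (ld_inj D), (ld_prj D); exact: ld_decomp.
split; first by move=> t; apply: local_end_indecomposable; exact: ld_local.
exists [set t | pbool (in_class R (ld_obj D t))]; split.
  by move=> t; rewrite inE; split=> /pboolP.
rewrite (card_set_indic (P := fun t => in_class R (ld_obj D t))) // => t.
by rewrite inE; split=> /pboolP.
Qed.

Lemma mult_rel_eq (P Q R : SC C) i j l (F : tc_hom C j l) (G : tc_hom C i j) n :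
  in_class P F -> in_class Q G -> mult_rel P Q R n -> n = mult R (tc_c1 F G).
Proof.
move=> PF QG [|[_ []]]; last by exists i, j, l, F, G.
move=> [i' [j' [l' [F' [G' [PF' [QG' [m [Y [[inj [prj D]] [indY [A [AR ->]]]]]]]]]]]]].
have [ej el] := in_class_ij PF PF'; subst j' l'.
have [ei _] := in_class_ij QG QG'; subst i'.
rewrite -(mult_iso R (lc_iso_hcomp (in_class_iso PF' PF) (in_class_iso QG' QG))).
rewrite (card_set_indic AR) (multE R D) // => t.
exact: indecomposable_local.
Qed.

Lemma mu_mult (P Q R : SC C) i j l (F : tc_hom C j l) (G : tc_hom C i j) :
  in_class P F -> in_class Q G -> mu P Q R = mult R (tc_c1 F G).
Proof.
move=> PF QG; apply: (mult_rel_eq PF QG).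
by rewrite /mu; apply: epsilon_spec; exists (mult R (tc_c1 F G)); exact: mult_rel_mult.
Qed.

Lemma mu_not_composable (P Q R : SC C) : ~ composable P Q -> mu P Q R = 0%N.
Proof.
move=> nPQ; have : mult_rel P Q R 0 by right.
move=> /(ex_intro (mult_rel P Q R)) /(epsilon_spec (inhabits 0%N)).
rewrite -/(mu P Q R) => -[|[//]].
by move=> [i [j [l [F [G [PF [QG _]]]]]]]; case: nPQ; exists i, j, l, F, G.
Qed.

Lemma mult_hcompl (R : SC C) i j l (F : tc_hom C j l) (G : tc_hom C i j) (I : finType)
    (V : I -> tc_hom C i j) inj prj :
  @decomp _ _ G 1_G _ V inj prj -> mult R (tc_c1 F G) = (\sum_x mult R (tc_c1 F (V x)))%N.
Proof.
move=> DV; pose W x := some_decomp (tc_c1 F (V x)).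
rewrite (multE R (decomp_flatten (decomp_hcompl admC.2 F DV) (fun x => ld_decomp (W x)))).
  by rewrite -(sig_big_dep xpredT (fun _ => xpredT)
    (fun x y => indic (in_class R (ld_obj (W x) y)))).
by case=> x y; exact: ld_local.
Qed.

Lemma mult_hcompr (R : SC C) i j l (F : tc_hom C j l) (G : tc_hom C i j) (I : finType)
    (V : I -> tc_hom C j l) inj prj :
  @decomp _ _ F 1_F _ V inj prj -> mult R (tc_c1 F G) = (\sum_x mult R (tc_c1 (V x) G))%N.
Proof.
move=> DV; pose W x := some_decomp (tc_c1 (V x) G).
rewrite (multE R (decomp_flatten (decomp_hcompr admC.2 G DV) (fun x => ld_decomp (W x)))).
  by rewrite -(sig_big_dep xpredT (fun _ => xpredT)
    (fun x y => indic (in_class R (ld_obj (W x) y)))).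
by case=> x y; exact: ld_local.
Qed.

End Multiplicity.

Lemma sum_over_image (T : Type) (a : nat) (V : 'I_a -> T) (H : T -> nat) :
  exists m (g : 'I_m -> T), injective g /\ (forall x, exists t, g t = V x) /\
   (\sum_(t < m) (\sum_x indic (V x = g t)) * H (g t) = \sum_x H (V x))%N.
Proof.
elim: a V => [|a IH] V.
  by exists 0%N, (fun t : 'I_0 => V t); split; [case|split; [case|rewrite !big_ord0]].
have [m [g [g_inj [g_cover g_sum]]]] := IH (fun x => V (lift ord0 x)).
case: (classic (exists t, g t = V ord0)) => [[t0 gt0]|V0_new].
  exists m, g; split => //; split.
    by move=> x; case: (unliftP ord0 x) => [x'|] ->; [apply: g_cover|exists t0].
  rewrite [RHS]big_ord_recl -g_sum.
  under eq_bigr do rewrite big_ord_recl mulnDl; rewrite big_split /=.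
  rewrite (bigD1 t0) //= indicT // mul1n gt0 big1 ?addn0 // => t tt0.
  rewrite indicF ?mul0n // => V0t; move: tt0.
  by rewrite -(g_inj _ _ (etrans gt0 V0t)) eqxx.
exists m.+1, (fun t : 'I_m.+1 => oapp g (V ord0) (unlift ord_max t)); split; last split.
- move=> t1 t2; case: (unliftP ord_max t1) => [t1'|] ->;
    case: (unliftP ord_max t2) => [t2'|] ->; rewrite ?liftK ?unlift_none //=.
  + by move/g_inj ->.
  + by move=> E; case: V0_new; exists t1'.
  + by move=> E; case: V0_new; exists t2'.
- move=> x; case: (unliftP ord0 x) => [x'|] ->; last by exists ord_max; rewrite unlift_none.
  by have [t gt] := g_cover x'; exists (lift ord_max t); rewrite liftK.
rewrite (bigD1_ord ord_max) //= unlift_none /= [RHS]big_ord_recl -g_sum.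
congr (_ + _)%N.
  rewrite big_ord_recl indicT // big1 ?addn0 ?mul1n // => x _.
  by apply: indicF => E; have [t gt] := g_cover x; case: V0_new; exists t; rewrite gt.
apply: eq_bigr => t _; rewrite liftK /= big_ord_recl indicF ?add0n //.
by move=> E; case: V0_new; exists t.
Qed.

Lemma cmul_fin a b : cmul (Some a) (Some b) = Some (a * b)%N.
Proof. by case: a. Qed.

Lemma csum_rel_mul0 (I : Type) (f g : I -> nat) :
  (forall i, f i * g i = 0)%N -> csum_rel (fun i => cmul (Some (f i)) (Some (g i))) (Some 0%N).
Proof.
move=> fg0; split; first by move=> i; rewrite cmul_fin.
have no_index : 'I_0 -> I by case.
exists 0%N, no_index; split; first by case.
by split; [move=> i; rewrite cmul_fin fg0|rewrite big_ord0].
Qed.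

Section MultiplicityMultisemigroup.
Variables (k : fieldType) (C : TwoCat k).
Hypothesis admC : admissible C.

Lemma csum_mu_mul (P Q : SC C) i j l (F : tc_hom C j l) (G : tc_hom C i j) (h : SC C -> nat) :
  in_class P F -> in_class Q G ->
  csum_rel (fun R => cmul (Some (mu P Q R)) (Some (h R)))
    (Some (\sum_x h (ld_class (some_decomp admC (tc_c1 F G)) x))%N).
Proof.
move=> PF QG; set D := some_decomp admC _.
have muE R : mu P Q R = (\sum_x indic (ld_class D x = R))%N.
  by rewrite (mu_mult admC R PF QG) mult_classE.
have [m [g [g_inj [g_cover g_sum]]]] := sum_over_image (ld_class D) h.
split; first by move=> R; rewrite cmul_fin.
exists m, g; split=> //; split; last first.
  by rewrite -g_sum; apply: eq_bigr => t _; rewrite cmul_fin muE.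
move=> R; case: (classic (exists x, ld_class D x = R)) => [[x <-] _|noR].
  by have [t gt] := g_cover x; exists t.
rewrite cmul_fin muE big1 ?mul0n // => x _.
by apply: indicF => DxR; case: noR; exists x.
Qed.

Lemma mu_fin_support (P Q : SC C) : fin_support (fun R => Some (mu P Q R)).
Proof.
case: (classic (composable P Q)) => [[i [j [l [F [G [PF QG]]]]]]|nPQ]; last first.
  have no_index : 'I_0 -> SC C by case.
  by exists 0%N, no_index => R; rewrite mu_not_composable.
pose D := some_decomp admC (tc_c1 F G); exists (ld_size D), (ld_class D) => R muR.
case: (classic (exists x, ld_class D x = R)) => [//|noR]; case: muR.
rewrite (mu_mult admC R PF QG) mult_classE big1 // => x _.
by apply: indicF => DxR; case: noR; exists x.
Qed.

Lemma mu_neq0_classes (P Q R : SC C) : mu P Q R <> 0%N ->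
  exists i j l (F : tc_hom C j l) (G : tc_hom C i j) (Z : tc_hom C i l),
    [/\ in_class P F, in_class Q G & in_class R Z].
Proof.
move=> muR; case: (classic (composable P Q)); last by move/mu_not_composable.
move=> [i [j [l [F [G [PF QG]]]]]]; pose D := some_decomp admC (tc_c1 F G).
case: (classic (exists x, ld_class D x = R)) => [[x DxR]|noR].
  by exists i, j, l, F, G, (ld_obj D x); split=> //; exact/in_ld_class.
case: muR; rewrite (mu_mult admC R PF QG) mult_classE big1 // => x _.
by apply: indicF => DxR; case: noR; exists x.
Qed.

Lemma mu_mul_eq0_l (r s t u x : SC C) : ~ composable s t -> (mu r s x * mu x t u = 0)%N.
Proof.
move=> nst; apply/eqP; rewrite muln_eq0; apply/negPn/negP; rewrite negb_or.
move=> /andP [/eqP /mu_neq0_classes [i [j [l [F [G [Z [_ sG xZ]]]]]]]].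
move=> /eqP /mu_neq0_classes [i' [j' [l' [F' [G' [_ [xF' tG' _]]]]]]].
have [ej el] := in_class_ij xZ xF'; subst j' l'.
by case: nst; exists i', i, j, G, G'.
Qed.

Lemma mu_mul_eq0_r (r s t u x : SC C) : ~ composable r s -> (mu s t x * mu r x u = 0)%N.
Proof.
move=> nrs; apply/eqP; rewrite muln_eq0; apply/negPn/negP; rewrite negb_or.
move=> /andP [/eqP /mu_neq0_classes [i [j [l [F [G [Z [sF _ xZ]]]]]]]].
move=> /eqP /mu_neq0_classes [i' [j' [l' [F' [G' [_ [rF' xG' _]]]]]]].
have [ei ej] := in_class_ij xZ xG'; subst i' j'.
by case: nrs; exists j, l, l', F', F.
Qed.

Lemma csum_mu_left (r s t u : SC C) i j l m (F : tc_hom C l m) (G : tc_hom C j l)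
    (H : tc_hom C i j) :
  in_class r F -> in_class s G -> in_class t H ->
  csum_rel (fun x => cmul (Some (mu s t x)) (Some (mu r x u)))
    (Some (mult admC u (tc_c1 F (tc_c1 G H)))).
Proof.
move=> rF sG tH; pose D := some_decomp admC (tc_c1 G H).
rewrite (mult_hcompl admC u F (ld_decomp D)).
under eq_bigr => x _ do rewrite -(mu_mult admC u rF (in_class_ld_class D x)).
exact: csum_mu_mul.
Qed.

Lemma csum_mu_right (r s t u : SC C) i j l m (F : tc_hom C l m) (G : tc_hom C j l)
    (H : tc_hom C i j) :
  in_class r F -> in_class s G -> in_class t H ->
  csum_rel (fun x => cmul (Some (mu r s x)) (Some (mu x t u)))
    (Some (mult admC u (tc_c1 (tc_c1 F G) H))).
Proof.
move=> rF sG tH; pose D := some_decomp admC (tc_c1 F G).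
rewrite (mult_hcompr admC u H (ld_decomp D)).
under eq_bigr => x _ do rewrite -(mu_mult admC u (in_class_ld_class D x) tH).
exact: csum_mu_mul.
Qed.

Lemma mu_assoc (r s t u : SC C) : exists c,
  csum_rel (fun x => cmul (Some (mu s t x)) (Some (mu r x u))) c /\
  csum_rel (fun x => cmul (Some (mu r s x)) (Some (mu x t u))) c.
Proof.
case: (classic (composable s t)) => [[i [j [l [G [H [sG tH]]]]]]|nst]; last first.
  exists (Some 0%N); split; apply: csum_rel_mul0 => x; last exact: mu_mul_eq0_l.
  by rewrite mu_not_composable.
case: (classic (composable r s)) => [[j' [l' [m [F [G' [rF sG']]]]]]|nrs]; last first.
  exists (Some 0%N); split; apply: csum_rel_mul0 => x; first exact: mu_mul_eq0_r.
  by rewrite mu_not_composable.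
have [ej el] := in_class_ij sG sG'; subst j' l'.
exists (Some (mult admC u (tc_c1 F (tc_c1 G H)))); split; first exact: csum_mu_left.
by rewrite -tc_c1A; exact: csum_mu_right.
Qed.

End MultiplicityMultisemigroup.

Theorem theorem6 (k : fieldType) (C : TwoCat k) :
  admissible C -> inhabited (SC C) ->
  finitary_multisemigroup (fun P Q R : SC C => Some (mu P Q R)).
Proof.
move=> admC inhC; split; first by split; [exact: inhC|exact: mu_assoc admC].
split; first by [].
by move=> r s; exact: mu_fin_support admC r s.
Qed.
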